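(* Let $(\mathfrak g,[\cdot,\cdot],\alpha,\varepsilon,B)$ be a quadratic multiplicative color Hom-Lie algebra, $\rho$ a representation of $\mathfrak g$ on $(M,\beta)$ with $\alpha^2=\mathrm{id}$ and $\beta^2=\mathrm{id}$, and assume that $\tilde\rho$, $\tilde\rho(x)(f)=-\varepsilon(x,f)\,f\circ\rho(x)$, is a representation of $\mathfrak g$ on $(M^*,\tilde\beta)$, $\tilde\beta(f)=f\circ\beta$. Let $\mathscr D:M\otimes M^*\to\mathfrak g$ be the even linear map defined by $B(x,\mathscr D(m\otimes f))=\langle\rho(\alpha(x))(m),f\rangle$ for all $x\in\mathfrak g$, where $\langle n,f\rangle=\varepsilon(n,f)f(n)$ for homogeneous $n,f$. Then for all homogeneous $x\in\mathfrak g$, $m\in M$, $f\in M^*$: $[x,\mathscr D(m\otimes f)]=\mathscr D\big(\rho(x)(m)\otimes\tilde\beta(f)+\varepsilon(x,m)\,\beta(m)\otimes\tilde\rho(x)(f)\big)$.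
   Context: $\mathbb K$ is a field of characteristic zero and $\Gamma$ an abelian group. A bicharacter is a map $\varepsilon:\Gamma\times\Gamma\to\mathbb K\setminus\{0\}$ with $\varepsilon(a,b)\varepsilon(b,a)=1$, $\varepsilon(a,b+c)=\varepsilon(a,b)\varepsilon(a,c)$, $\varepsilon(a+b,c)=\varepsilon(a,c)\varepsilon(b,c)$; for homogeneous elements $\varepsilon(x,y)=\varepsilon(\deg x,\deg y)$. A color Hom-Lie algebra $(\mathfrak g,[\cdot,\cdot],\alpha,\varepsilon)$: $\Gamma$-graded space, even bilinear bracket, even linear $\alpha$, with $[x,y]=-\varepsilon(x,y)[y,x]$ and $\varepsilon(z,x)[\alpha(x),[y,z]]+\varepsilon(x,y)[\alpha(y),[z,x]]+\varepsilon(y,z)[\alpha(z),[x,y]]=0$; multiplicative means $\alpha([x,y])=[\alpha(x),\alpha(y)]$; quadratic means equipped with a nondegenerate bilinear form $B$ that is $\varepsilon$-symmetric ($B(x,y)=\varepsilon(x,y)B(y,x)$), invariant ($B([x,y],z)=B(x,[y,z])$), with $B(\alpha(x),y)=B(x,\alpha(y))$. A representation of a multiplicative $\mathfrak g$ on $(M,\beta)$ is an even linear $\rho:\mathfrak g\to\mathfrak{gl}(M)$ with $\rho([x,y])\circ\beta=\rho(\alpha(x))\circ\rho(y)-\varepsilon(x,y)\rho(\alpha(y))\circ\rho(x)$ and $\beta\circ\rho(x)=\rho(\alpha(x))\circ\beta$. $M^*$ is the graded dual (degree-$\gamma$ forms vanish on $M_\delta$ for $\delta\ne-\gamma$). *)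

From mathcomp Require Import all_boot all_order all_algebra.
Set Implicit Arguments. Unset Strict Implicit. Unset Printing Implicit Defensive.
Import GRing.Theory.
Local Open Scope ring_scope.

Section ColorHomLie.
Variables (K : fieldType) (G : zmodType).

Definition is_bichar (eps : G -> G -> K) : Prop :=
  [/\ (forall a b, eps a b != 0),
      (forall a b, eps a b * eps b a = 1),
      (forall a b c, eps a (b + c) = eps a b * eps a c) &
      (forall a b c, eps (a + b) c = eps a c * eps b c)].

Definition lin (U V : lmodType K) (f : U -> V) : Prop :=
  forall k u v, f (k *: u + v) = k *: f u + f v.
Definition linK (U : lmodType K) (f : U -> K) : Prop :=
  forall k u v, f (k *: u + v) = k * f u + f v.

(* A G-grading of the K-vector space V: hom g v means "v is homogeneous of
   degree g" (i.e. v lies in V_g).  V is the direct sum of the subspaces V_g. *)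
Definition is_grading (V : lmodType K) (hom : G -> V -> Prop) : Prop :=
  [/\ (forall g, hom g 0),
      (forall g k u v, hom g u -> hom g v -> hom g (k *: u + v)),
      (forall (s : seq G) (v : G -> V), uniq s -> (forall g, hom g (v g)) ->
          \sum_(g <- s) v g = 0 -> forall g, g \in s -> v g = 0) &
      (forall x : V, exists (s : seq G) (v : G -> V),
          (forall g, hom g (v g)) /\ x = \sum_(g <- s) v g)].

Definition even_lin (U V : lmodType K) (homU : G -> U -> Prop)
  (homV : G -> V -> Prop) (f : U -> V) : Prop :=
  lin f /\ forall g u, homU g u -> homV g (f u).

Definition color_hom_lie (g : lmodType K) (hom : G -> g -> Prop)
  (br : g -> g -> g) (alpha : g -> g) (eps : G -> G -> K) : Prop :=
  [/\ is_bichar eps /\ is_grading hom,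
      ((forall x, lin (br x)) /\ (forall y, lin (br^~ y)) /\
       (forall a b x y, hom a x -> hom b y -> hom (a + b) (br x y))),
      even_lin hom hom alpha,
      (forall a b x y, hom a x -> hom b y -> br x y = - (eps a b *: br y x)) &
      (forall a b c x y z, hom a x -> hom b y -> hom c z ->
         eps c a *: br (alpha x) (br y z) + eps a b *: br (alpha y) (br z x)
         + eps b c *: br (alpha z) (br x y) = 0)].

Definition hom_multiplicative (g : lmodType K) (br : g -> g -> g) (alpha : g -> g) :=
  forall x y, alpha (br x y) = br (alpha x) (alpha y).

Definition quadratic_form (g : lmodType K) (hom : G -> g -> Prop)
  (br : g -> g -> g) (alpha : g -> g) (eps : G -> G -> K) (B : g -> g -> K) :=
  [/\ ((forall x, linK (B x)) /\ (forall y, linK (B^~ y))),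
      ((forall x, (forall y, B x y = 0) -> x = 0) /\
       (forall y, (forall x, B x y = 0) -> y = 0)),
      (forall a b x y, hom a x -> hom b y -> B x y = eps a b * B y x),
      (forall x y z, B (br x y) z = B x (br y z)) &
      (forall x y, B (alpha x) y = B x (alpha y))].

Definition representation (g : lmodType K) (hom : G -> g -> Prop)
  (br : g -> g -> g) (alpha : g -> g) (eps : G -> G -> K)
  (M : lmodType K) (homM : G -> M -> Prop) (rho : g -> M -> M) (beta : M -> M) :=
  [/\ is_grading homM,
      even_lin homM homM beta,
      ((forall k x y m, rho (k *: x + y) m = k *: rho x m + rho y m) /\ (forall x, lin (rho x)) /\
       (forall a b x m, hom a x -> homM b m -> homM (a + b) (rho x m))),
      (forall a b x y m, hom a x -> hom b y ->
         rho (br x y) (beta m) =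
         rho (alpha x) (rho y m) - eps a b *: rho (alpha y) (rho x m)) &
      (forall x m, beta (rho x m) = rho (alpha x) (beta m))].

(* Homogeneous elements of degree c of the graded dual M^* : linear forms
   M -> K vanishing on M_d for d <> -c. *)
Definition dual_hom (M : lmodType K) (homM : G -> M -> Prop) (c : G)
  (f : M -> K) : Prop :=
  linK f /\ (forall d n, d != - c -> homM d n -> f n = 0).

Definition tbeta (M : lmodType K) (beta : M -> M) (f : M -> K) : M -> K :=
  fun n => f (beta n).

(* tilde rho (x)(f) = - eps(x,f) f o rho(x), for x of degree a, f of degree c *)
Definition trho (g M : lmodType K) (eps : G -> G -> K) (rho : g -> M -> M)
  (a : G) (x : g) (c : G) (f : M -> K) : M -> K :=
  fun n => - (eps a c * f (rho x n)).

(* tilde rho is a representation of g on (M^*, tilde beta); stated on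
   homogeneous elements (the maps being extended (bi)linearly). *)
Definition dual_representation (g : lmodType K) (hom : G -> g -> Prop)
  (br : g -> g -> g) (alpha : g -> g) (eps : G -> G -> K)
  (M : lmodType K) (homM : G -> M -> Prop) (rho : g -> M -> M) (beta : M -> M) :=
  (forall a b c x y f, hom a x -> hom b y -> dual_hom homM c f ->
     forall n,
     trho eps rho (a + b) (br x y) c (tbeta beta f) n =
     trho eps rho a (alpha x) (b + c) (trho eps rho b y c f) n
     - eps a b * trho eps rho b (alpha y) (a + c) (trho eps rho a x c f) n) /\
  (forall a c x f, hom a x -> dual_hom homM c f ->
     forall n, tbeta beta (trho eps rho a x c f) n =
               trho eps rho a (alpha x) c (tbeta beta f) n).

End ColorHomLie.

(* Pair both sides with an arbitrary homogeneous y through the nondegenerate form B.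
   Invariance turns B(y, [x, D(m (x) f)]) into B([y, x], D(m (x) f)), i.e. into f evaluated
   on rho(alpha [y, x]) m, and the representation identity, applied to beta m and
   simplified by alpha^2 = id and beta^2 = id, splits this into the two terms obtained by
   pairing y with the right-hand side; the signs agree by bimultiplicativity of eps. *)
From mathcomp Require Import all_boot all_order all_algebra.
From mathcomp Require Import ring.
Set Implicit Arguments. Unset Strict Implicit. Unset Printing Implicit Defensive.
Import GRing.Theory.
Local Open Scope ring_scope.

Section LinearForms.
Variables (K : fieldType) (U : lmodType K) (f : U -> K).
Hypothesis f_lin : linK f.

Lemma linK0 : f 0 = 0.
Proof.
have := f_lin 1 0 0; rewrite scale1r addr0 mul1r => E.
by apply: (@addrI _ (f 0)); rewrite addr0 -E.
Qed.

Lemma linKD u v : f (u + v) = f u + f v.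
Proof. by have := f_lin 1 u v; rewrite scale1r mul1r. Qed.

Lemma linKZ k u : f (k *: u) = k * f u.
Proof. by have := f_lin k u 0; rewrite addr0 linK0 addr0. Qed.

Lemma linKB u v : f (u - v) = f u - f v.
Proof. by rewrite linKD -scaleN1r linKZ mulN1r. Qed.

Lemma linK_sum (I : Type) (s : seq I) (v : I -> U) :
  f (\sum_(i <- s) v i) = \sum_(i <- s) f (v i).
Proof.
elim: s => [|i s IHs]; first by rewrite !big_nil linK0.
by rewrite !big_cons linKD IHs.
Qed.

End LinearForms.

Lemma bichar_swap (K : fieldType) (G : zmodType) (eps : G -> G -> K) a b :
  is_bichar eps -> eps b a = (eps a b)^-1.
Proof.
case=> eps_neq0 eps_inv _ _.
by apply: (mulfI (eps_neq0 a b)); rewrite eps_inv mulfV.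
Qed.

Lemma eq_of_pairing_hom (K : fieldType) (G : zmodType) (V : lmodType K)
    (hom : G -> V -> Prop) (B : V -> V -> K) (u v : V) :
  is_grading hom -> (forall x, linK (B x)) -> (forall y, linK (B^~ y)) ->
  (forall y, (forall x, B x y = 0) -> y = 0) ->
  (forall e y, hom e y -> B y u = B y v) -> u = v.
Proof.
case=> _ _ _ decomp B_linr B_linl B_nondeg Buv; apply/eqP; rewrite -subr_eq0; apply/eqP.
apply: B_nondeg => y; have [s [w [w_hom ->]]] := decomp y.
rewrite (linK_sum (B_linl _)) big1 // => e _.
by rewrite (linKB (B_linr _)) (Buv e) ?subrr.
Qed.

Section DualModule.
Variables (K : fieldType) (G : zmodType) (g M : lmodType K).
Variables (hom : G -> g -> Prop) (homM : G -> M -> Prop).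

Lemma dual_hom_tbeta (beta : M -> M) c f :
  even_lin homM homM beta -> dual_hom homM c f -> dual_hom homM c (tbeta beta f).
Proof.
case=> beta_lin beta_hom [f_lin f_hom]; split.
  by move=> k u v; rewrite /tbeta beta_lin f_lin.
by move=> d n d_neq n_hom; apply: f_hom d_neq (beta_hom _ _ n_hom).
Qed.

Lemma dual_hom_trho (eps : G -> G -> K) (rho : g -> M -> M) a x c f :
  (forall x, lin (rho x)) ->
  (forall a b x m, hom a x -> homM b m -> homM (a + b) (rho x m)) ->
  hom a x -> dual_hom homM c f -> dual_hom homM (a + c) (trho eps rho a x c f).
Proof.
move=> rho_lin rho_hom x_hom [f_lin f_hom]; split.
  by move=> k u v; rewrite /trho rho_lin f_lin; ring.
move=> d n d_neq n_hom; rewrite /trho (f_hom (a + d)) ?mulr0 ?oppr0 //.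
  by apply: contra d_neq => /eqP adE; rewrite -[d](addKr a) adE opprD.
exact: rho_hom.
Qed.

End DualModule.

Section PairingWithD.
Variables (K : fieldType) (G : zmodType) (g M : lmodType K).
Variables (hom : G -> g -> Prop) (br : g -> g -> g) (alpha : g -> g).
Variables (eps : G -> G -> K) (B : g -> g -> K).
Variables (homM : G -> M -> Prop) (rho : g -> M -> M) (beta : M -> M).
Variable D : M -> (M -> K) -> g.

Hypothesis eps_bichar : is_bichar eps.
Hypothesis br_hom : forall a b x y, hom a x -> hom b y -> hom (a + b) (br x y).
Hypothesis alpha_hom : forall a x, hom a x -> hom a (alpha x).
Hypothesis alpha_mult : hom_multiplicative br alpha.
Hypothesis alphaK : forall x, alpha (alpha x) = x.
Hypothesis B_lin : forall x, linK (B x).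
Hypothesis B_invariant : forall x y z, B (br x y) z = B x (br y z).
Hypothesis beta_even : even_lin homM homM beta.
Hypothesis betaK : forall m, beta (beta m) = m.
Hypothesis rho_lin : forall x, lin (rho x).
Hypothesis rho_hom : forall a b x m, hom a x -> homM b m -> homM (a + b) (rho x m).
Hypothesis rho_br : forall a b x y m, hom a x -> hom b y ->
  rho (br x y) (beta m) = rho (alpha x) (rho y m) - eps a b *: rho (alpha y) (rho x m).
Hypothesis beta_rho : forall x m, beta (rho x m) = rho (alpha x) (beta m).
Hypothesis D_pairing : forall a b c x m f, hom a x -> homM b m -> dual_hom homM c f ->
  B x (D m f) = eps (a + b) c * f (rho (alpha x) m).

Variables (e a b c : G) (y x : g) (m : M) (f : M -> K).
Hypotheses (y_hom : hom e y) (x_hom : hom a x) (m_hom : homM b m).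
Hypothesis f_hom : dual_hom homM c f.

Lemma pairing_br_D :
  B y (br x (D m f)) = eps (e + a + b) c *
    (f (rho y (rho (alpha x) (beta m))) - eps e a * f (rho x (rho (alpha y) (beta m)))).
Proof.
rewrite -B_invariant (D_pairing (br_hom y_hom x_hom) m_hom f_hom) alpha_mult.
have := rho_br (beta m) (alpha_hom y_hom) (alpha_hom x_hom).
by rewrite betaK !alphaK => ->; rewrite (linKB f_hom.1) (linKZ f_hom.1).
Qed.

Lemma pairing_D_rho :
  B y (D (rho x m) (tbeta beta f)) = eps (e + (a + b)) c * f (rho y (rho (alpha x) (beta m))).
Proof.
rewrite (D_pairing y_hom (rho_hom x_hom m_hom) (dual_hom_tbeta beta_even f_hom)).
by rewrite /tbeta beta_rho alphaK beta_rho.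
Qed.

Lemma pairing_D_trho :
  B y (D (beta m) (trho eps rho a x c f)) =
    - (eps (e + b) (a + c) * eps a c * f (rho x (rho (alpha y) (beta m)))).
Proof.
rewrite (D_pairing y_hom (beta_even.2 _ _ m_hom) (dual_hom_trho eps rho_lin rho_hom x_hom f_hom)).
by rewrite /trho mulrN mulrA.
Qed.

Lemma pairing_D_equivariant :
  B y (br x (D m f)) =
  B y (D (rho x m) (tbeta beta f) + eps a b *: D (beta m) (trho eps rho a x c f)).
Proof.
have [eps_neq0 _ eps_addr eps_addl] := eps_bichar.
rewrite pairing_br_D (linKD (B_lin y)) (linKZ (B_lin y)) pairing_D_rho pairing_D_trho.
rewrite !eps_addl !eps_addr (bichar_swap a b eps_bichar).
by field; apply: eps_neq0.
Qed.

End PairingWithD.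

Theorem mainTheorem13 (K : fieldType) (G : zmodType)
  (g : lmodType K) (hom : G -> g -> Prop) (br : g -> g -> g) (alpha : g -> g)
  (eps : G -> G -> K) (B : g -> g -> K)
  (M : lmodType K) (homM : G -> M -> Prop) (rho : g -> M -> M) (beta : M -> M)
  (D : M -> (M -> K) -> g) :
  [pchar K] =i pred0 ->
  color_hom_lie hom br alpha eps ->
  hom_multiplicative br alpha ->
  quadratic_form hom br alpha eps B ->
  representation hom br alpha eps homM rho beta ->
  (forall x, alpha (alpha x) = x) ->
  (forall m, beta (beta m) = m) ->
  dual_representation hom br alpha eps homM rho beta ->
  (* D : M (x) M^* -> g is even ... *)
  (forall b c m f, homM b m -> dual_hom homM c f -> hom (b + c) (D m f)) ->
  (* ... and B(x, D(m (x) f)) = < rho(alpha x)(m), f > *)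
  (forall a b c x m f, hom a x -> homM b m -> dual_hom homM c f ->
     B x (D m f) = eps (a + b) c * f (rho (alpha x) m)) ->
  forall a b c x m f, hom a x -> homM b m -> dual_hom homM c f ->
    br x (D m f) =
    D (rho x m) (tbeta beta f) + eps a b *: D (beta m) (trho eps rho a x c f).
Proof.
move=> _ [[eps_bichar grading] [_ [_ br_hom]] [_ alpha_hom] _ _] alpha_mult
  [[B_linr B_linl] [_ B_nondeg] _ B_invariant _]
  [_ beta_even [_ [rho_lin rho_hom]] rho_br beta_rho]
  alphaK betaK _ _ D_pairing a b c x m f x_hom m_hom f_hom.
apply: (eq_of_pairing_hom grading B_linr B_linl B_nondeg) => e y y_hom.
exact: (pairing_D_equivariant eps_bichar br_hom alpha_hom alpha_mult alphaK
  B_linr B_invariant beta_even betaK rho_lin rho_hom rho_br beta_rho D_pairing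
  y_hom x_hom m_hom f_hom).
Qed.
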